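(* Let $K$ be a field complete with respect to a discrete valuation with perfect residue field of characteristic $p>0$, and let $L/K$ be a totally ramified Galois extension of degree $p$ with (lower) ramification break $b_1$. If $K$ has characteristic $p$, then $L/K$ has a Galois scaffold of tolerance $\mathfrak{T}=\infty$. If $K$ has characteristic $0$ and $b_1\ne pv_K(p)/(p-1)$, then $L/K$ has a Galois scaffold of tolerance $\mathfrak{T}=pv_K(p)-(p-1)b_1\ge1$.
   Context: $v_K,v_L$ are the normalized valuations of $K,L$; $\mathfrak{O}_K,\mathfrak{O}_L$ valuation rings, $\mathfrak{P}_L$ maximal ideal of $\mathfrak{O}_L$. For a totally ramified Galois extension $L/K$ of degree $p^n$ with group $G$, the ramification groups are $G_j=\{\sigma\in G:(\sigma-1)\mathfrak{O}_L\subseteq\mathfrak{P}_L^{j+1}\}$ and the lower ramification breaks counted with multiplicity are $b_i=\max\{j:|G_j|>p^{n-i}\}$, $1\le i\le n$. Let $\mathbb{S}_{p^n}=\{0,\dots,p^n-1\}$ with base-$p$ digits $s=\sum_{i=1}^n s_{(n-i)}p^{n-i}$. For integers $b_1,\dots,b_n$ prime to $p$, $\mathfrak{b}(s)=\sum_i s_{(n-i)}p^{n-i}b_i$, and $\mathfrak{a}(t)\in\mathbb{S}_{p^n}$ (for $t\in\mathbb{Z}$) is the unique element with $\mathfrak{b}(\mathfrak{a}(t))\equiv-t\pmod{p^n}$. A $K[G]$-scaffold on $L$ of tolerance $\mathfrak{T}\ge1$ (possibly $\infty$) with shift parameters $b_1,\dots,b_n$ consists of: (i) $\lambda_t\in L$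 ($t\in\mathbb{Z}$) with $v_L(\lambda_t)=t$ and $\lambda_{t_1}\lambda_{t_2}^{-1}\in K$ whenever $t_1\equiv t_2\pmod{p^n}$; (ii) $\Psi_1,\dots,\Psi_n\in K[G]$ with $\Psi_i\cdot1=0$ such that for each $i,t$ there is $u_{i,t}\in\mathfrak{O}_K^\times$ with $\Psi_i\cdot\lambda_t\equiv u_{i,t}\lambda_{t+p^{n-i}b_i}$ if $\mathfrak{a}(t)_{(n-i)}\ge1$ and $\equiv0$ if $\mathfrak{a}(t)_{(n-i)}=0$, modulo $\lambda_{t+p^{n-i}b_i}\mathfrak{P}_L^{\mathfrak{T}}$ (equalities if $\mathfrak{T}=\infty$). A Galois scaffold is a $K[G]$-scaffold (with $K[G]$ acting on $L$ in the usual way, residue field perfect) whose shift parameters are the lower ramification breaks $b_1,\dots,b_n$ of $L/K$. *)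

From HB Require Import structures.
From mathcomp Require Import all_boot all_order all_algebra all_fingroup all_field.
From mathcomp Require Import boolp.
Set Implicit Arguments.
Unset Strict Implicit.
Unset Printing Implicit Defensive.
Import Order.TTheory GRing.Theory Num.Theory.
Local Open Scope ring_scope.

(* x lies in P^N for the valuation v (value of v at 0 is irrelevant). *)
Definition vge (F : fieldType) (v : F -> int) (x : F) (N : int) : Prop :=
  x = 0 \/ N <= v x.

Definition is_normalized_dval (F : fieldType) (v : F -> int) : Prop :=
  [/\ (forall x y, x != 0 -> y != 0 -> v (x * y) = v x + v y),
      (forall x y, x != 0 -> y != 0 -> x + y != 0 ->
                  Num.min (v x) (v y) <= v (x + y)) &
      exists pi, pi != 0 /\ v pi = 1 ].

Definition complete_wrt (F : fieldType) (v : F -> int) : Prop :=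
  forall u : nat -> F,
    (forall N : int, exists M, forall m k, (M <= m)%N -> (M <= k)%N ->
         vge v (u m - u k) N) ->
    exists l, forall N : int, exists M, forall m, (M <= m)%N -> vge v (u m - l) N.

Definition residue_perfect (F : fieldType) (v : F -> int) (p : nat) : Prop :=
  forall x, vge v x 0 -> exists y, vge v y 0 /\ vge v (x - y ^+ p) 1.

Section Scaffold.
Variables (K : fieldType) (L : splittingFieldType K).
Variables (vK : K -> int) (vL : L -> int) (p : nat).

(* Elements of the group algebra K[G], G = Gal(L/K) = gal_of {:L}. *)
Definition Kgroupalg := {ffun gal_of {:L} -> K}.

Definition kg_act (Psi : Kgroupalg) (x : L) : L :=
  \sum_(s : gal_of {:L}) Psi s *: s x.

Definition digit (s k : nat) : nat := (s %/ p ^ k) %% p.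

Definition bfun (n : nat) (b : nat -> int) (s : nat) : int :=
  \sum_(1 <= i < n.+1) ((digit s (n - i) * p ^ (n - i))%N)%:Z * b i.

Definition afun (n : nat) (b : nat -> int) (t : int) : nat :=
  find (fun s => ((bfun n b s + t) %% (p ^ n)%N%:Z)%Z == 0) (iota 0 (p ^ n)).

(* x = z mod y * P_L^T ; T = None stands for infinity (equality). *)
Definition congr_mod (T : option int) (y x z : L) : Prop :=
  match T with
  | None => x = z
  | Some T => exists w, vge vL w T /\ x - z = y * w
  end.

Definition tol_ge1 (T : option int) : Prop :=
  match T with None => True | Some T => 1 <= T end.

Definition is_scaffold (n : nat) (b : nat -> int) (T : option int)
    (lam : int -> L) (Psi : nat -> Kgroupalg) : Prop :=
  (forall i, (1 <= i <= n)%N -> ~~ (((p%:Z) %| b i)%Z)) /\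
  tol_ge1 T /\
  (forall t, lam t != 0 /\ vL (lam t) = t) /\
  (forall t1 t2, (t1 == t2 %[mod (p ^ n)%N%:Z])%Z ->
        exists a : K, lam t1 / lam t2 = a%:A) /\
  (forall i, (1 <= i <= n)%N -> kg_act (Psi i) 1 = 0) /\
  (forall i t, (1 <= i <= n)%N ->
        exists u : K, [/\ u != 0, vK u = 0 &
          (if (0 < digit (afun n b t) (n - i))%N
           then congr_mod T (lam (t + (p ^ (n - i))%N%:Z * b i))
                 (kg_act (Psi i) (lam t)) (u%:A * lam (t + (p ^ (n - i))%N%:Z * b i))
           else congr_mod T (lam (t + (p ^ (n - i))%N%:Z * b i))
                 (kg_act (Psi i) (lam t)) 0)]).

Definition ram_group (j : int) : {set gal_of {:L}} :=
  [set s : gal_of {:L} | `[< forall x, vge vL x 0 -> vge vL (s x - x) (j + 1) >]].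

Definition lower_break (n i : nat) (b : int) : Prop :=
  (p ^ (n - i) < #|ram_group b|)%N /\
  forall j : int, (p ^ (n - i) < #|ram_group j|)%N -> j <= b.

Definition galois_scaffold (n : nat) (T : option int) : Prop :=
  exists b : nat -> int,
    (forall i, (1 <= i <= n)%N -> lower_break n i (b i)) /\
    exists (lam : int -> L) (Psi : nat -> Kgroupalg), is_scaffold n b T lam Psi.

End Scaffold.

(* Let s generate Gal(L/K), let pi and cc be uniformizers of L and K, and let
   delta = s - 1.  Since L/K is totally ramified of degree p, the powers pi^i
   (i < p) form a K-basis whose terms have valuations distinct mod p; hence
   delta raises valuations by at least the break b, and by exactly b on elements
   of valuation prime to p.  Expanding (1 + delta)^p = s^p = 1 gives
   delta^p = - sum_(0<i<p) C(p,i) delta^i, whose right side vanishes in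
   characteristic p and is dominated by p delta in characteristic 0; applied to
   pi this shows that p does not divide b.  Starting from Y = pi^(-(p-1)b), the
   elements delta^j Y (j < p) have valuations -(p-1)b + jb, one in each residue
   class mod p, so scaling them by powers of cc yields lambda_t for every t,
   and delta shifts lambda_t to lambda_(t+b) except at the top, where the error
   delta^p Y is either 0 or of valuation b + (p v_K(p) - (p-1)b). *)

From HB Require Import structures.
From mathcomp Require Import all_boot all_order all_algebra all_fingroup all_field.
From mathcomp Require Import zify ring.
From mathcomp Require Import boolp.
Set Implicit Arguments.
Unset Strict Implicit.
Unset Printing Implicit Defensive.
Import Order.TTheory GRing.Theory Num.Theory FalgLfun.
Local Open Scope ring_scope.

Section Valuation.
Variables (F : fieldType) (v : F -> int).
Hypothesis hv : is_normalized_dval v.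

Lemma valM x y : x != 0 -> y != 0 -> v (x * y) = v x + v y.
Proof. by case: hv => h _ _; apply: h. Qed.

Lemma val1 : v 1 = 0.
Proof.
have h : v (1 * 1) = v 1 + v 1 by apply: valM; rewrite oner_neq0.
rewrite mulr1 in h; lia.
Qed.

Lemma valV x : x != 0 -> v x^-1 = - v x.
Proof.
move=> x0; have h : v (x * x^-1) = v x + v x^-1 by apply: valM; rewrite ?invr_eq0.
rewrite mulfV // val1 in h; lia.
Qed.

Lemma valN x : v (- x) = v x.
Proof.
have [->|x0] := eqVneq x 0; first by rewrite oppr0.
have n1 : (-1 : F) != 0 by rewrite oppr_eq0 oner_neq0.
have h : v (-1 * -1) = v (-1) + v (-1) by apply: valM.
by rewrite -mulN1r valM // addrC; rewrite mulrNN mulr1 val1 in h; lia.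
Qed.

Lemma valX x n : x != 0 -> v (x ^+ n) = n%:Z * v x.
Proof.
move=> x0; elim: n => [|n IH]; first by rewrite expr0 val1 mul0r.
rewrite exprS valM ?expf_neq0 // IH; lia.
Qed.

Lemma valXz x (m : int) : x != 0 -> v (x ^ m) = m * v x.
Proof.
move=> x0; case: m => n; first by rewrite -exprnP valX.
rewrite NegzE -exprnN valV ?expf_neq0 // valX //; lia.
Qed.

Lemma vgeW N M x : M <= N -> vge v x N -> vge v x M.
Proof. by move=> le [->|h]; [left | right; lia]. Qed.

Lemma vgeE x N : x != 0 -> vge v x N <-> N <= v x.
Proof. by move=> x0; split; [case=> // /eqP; rewrite (negPf x0) | right]. Qed.

Lemma vge_val x : vge v x (v x). Proof. by right. Qed.

Lemma vgeN x N : vge v x N -> vge v (- x) N.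
Proof. by case=> [->|h]; [left; rewrite oppr0 | right; rewrite valN]. Qed.

Lemma vgeD x y N : vge v x N -> vge v y N -> vge v (x + y) N.
Proof.
case=> [->|hx]; first by rewrite add0r.
case=> [->|hy]; first by rewrite addr0; right.
have [->|s0] := eqVneq (x + y) 0; first by left.
have [->|x0] := eqVneq x 0; first by rewrite add0r; right.
have [->|y0] := eqVneq y 0; first by rewrite addr0; right.
right; case: hv => _ hmin _; have := hmin x y x0 y0 s0.
by rewrite ge_min => /orP[] h; [exact: le_trans hx h | exact: le_trans hy h].
Qed.

Lemma vgeB x y N : vge v x N -> vge v y N -> vge v (x - y) N.
Proof. by move=> hx hy; apply/vgeD/vgeN. Qed.

Lemma vgeM x y N M : vge v x N -> vge v y M -> vge v (x * y) (N + M).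
Proof.
case=> [->|hx]; first by rewrite mul0r; left.
case=> [->|hy]; first by rewrite mulr0; left.
have [->|x0] := eqVneq x 0; first by rewrite mul0r; left.
have [->|y0] := eqVneq y 0; first by rewrite mulr0; left.
by right; rewrite valM //; lia.
Qed.

Lemma vge_sum (I : Type) (r : seq I) (P : pred I) (f : I -> F) N :
  (forall i, P i -> vge v (f i) N) -> vge v (\sum_(i <- r | P i) f i) N.
Proof.
move=> h; elim/big_rec: _ => [|i x Pi hx]; first by left.
by apply: vgeD => //; apply: h.
Qed.

Lemma vge_nat n : vge v n%:R 0.
Proof.
elim: n => [|n IH]; first by left.
by rewrite -addn1 natrD; apply: vgeD => //; right; rewrite val1.
Qed.

Lemma vge0_expn x n : vge v x 0 -> vge v (x ^+ n) 0.
Proof.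
move=> hx; elim: n => [|n IH]; first by right; rewrite expr0 val1.
by rewrite exprS; have := vgeM hx IH.
Qed.

Lemma vge1_expn x n : (0 < n)%N -> vge v (x ^+ n) 1 -> vge v x 1.
Proof.
move=> n0; have [->|x0] := eqVneq x 0; first by left.
by rewrite (vgeE _ (expf_neq0 _ x0)) (vgeE _ x0) valX //; nia.
Qed.

Lemma val_addr_small x y : x != 0 -> vge v y (v x + 1) ->
  x + y != 0 /\ v (x + y) = v x.
Proof.
move=> x0 hy; have hxy : vge v (x + y) (v x).
  by apply: vgeD; [right | apply: vgeW hy; lia].
have hx : vge v (x + y - y) (v x + 1) -> False.
  by rewrite addrK => /(vgeE _ x0); lia.
have s0 : x + y != 0.
  by apply/eqP => e; apply: hx; rewrite e sub0r; apply: vgeN.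
split=> //; move: hxy => /(vgeE _ s0) le; apply/le_anti; rewrite le andbT.
rewrite leNgt; apply/negP => lt; apply: hx; apply: vgeB; last exact: hy.
by right; lia.
Qed.

Lemma val_nat_coprime (p n : nat) : prime p -> vge v p%:R 1 -> ~~ (p %| n)%N ->
  n%:R != 0 :> F /\ v n%:R = 0.
Proof.
move=> pp hp ndvd.
have [a _ /dvdnP[q hq]] := Bezoutl n (prime_gt0 pp).
have /eqP g1 : gcdn p n == 1%N by rewrite -/(coprime p n) prime_coprime.
rewrite g1 in hq.
have e : n%:R * a%:R = - 1 + q%:R * p%:R :> F.
  by rewrite -!natrM -hq natrD addKr mulnC.
have n1 : (-1 : F) != 0 by rewrite oppr_eq0 oner_eq0.
have hqp : vge v (q%:R * p%:R : F) (v (-1 : F) + 1).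
  by rewrite valN val1 add0r; have := vgeM (vge_nat q) hp; rewrite add0r.
have [nz ve] := val_addr_small n1 hqp; rewrite -e valN val1 in nz ve.
have n0 : n%:R != 0 :> F by apply: contraNneq nz => ->; rewrite mul0r.
have a0 : a%:R != 0 :> F by apply: contraNneq nz => ->; rewrite mulr0.
split=> //; rewrite valM // in ve.
move: (proj1 (vgeE _ n0) (vge_nat n)) (proj1 (vgeE _ a0) (vge_nat a)); lia.
Qed.

Lemma vge_frobenius_defect (p : nat) (d : F) : prime p -> vge v p%:R 1 ->
  vge v d 0 -> vge v (d ^+ p - 1 - (d - 1) ^+ p) 1.
Proof.
move=> pp hp hd; set g := d - 1.
have hg : vge v g 0 by apply: vgeB => //; right; rewrite val1.
have -> : d ^+ p - 1 - g ^+ p = \sum_(1 <= i < p) g ^+ i *+ 'C(p, i).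
  rewrite -[d](subrK 1) -/g exprD1n.
  rewrite -(big_mkord xpredT (fun i => g ^+ i *+ 'C(p, i))).
  rewrite big_nat_recr //= big_ltn ?prime_gt0 // expr0 bin0 binn mulr1n.
  by set S := \sum_(1 <= i < p) _; ring.
rewrite big_seq; apply: vge_sum => i; rewrite mem_index_iota => hi.
have /dvdnP[m ->] := prime_dvd_bin pp hi.
rewrite -mulr_natr natrM.
by have := vgeM (vge0_expn i hg) (vgeM (vge_nat m) hp); rewrite !add0r.
Qed.

End Valuation.

Lemma dvdz_small_eq0 (p : nat) (x : int) : (p%:Z %| x)%Z -> - p%:Z < x < p%:Z -> x = 0.
Proof.
move=> /dvdzP[q ->] /andP[h1 h2]; case: (ltgtP q 0) => hq; last by rewrite hq mul0r.
- have : (q + 1) * p%:Z <= 0 * p%:Z by apply: ler_wpM2r; lia.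
  lia.
- have : 1 * p%:Z <= q * p%:Z by apply: ler_wpM2r; lia.
  lia.
Qed.

Section BreakDigit.
Variables (p : nat) (beta : int).
Hypotheses (pp : prime p) (beta_ndvd : ~~ (p%:Z %| beta)%Z).

Lemma coprimez_break : coprimez p%:Z beta.
Proof. by rewrite coprimezE prime_coprime. Qed.

Lemma dvdz_mul_break (x : int) : (p%:Z %| x * beta)%Z -> - p%:Z < x < p%:Z -> x = 0.
Proof. rewrite Gauss_dvdzl ?coprimez_break //; exact: dvdz_small_eq0. Qed.

Lemma break_residue_uniq (s1 s2 : nat) (t : int) : (s1 < p)%N -> (s2 < p)%N ->
  (p%:Z %| s1%:Z * beta + t)%Z -> (p%:Z %| s2%:Z * beta + t)%Z -> s1 = s2.
Proof.
move=> h1 h2 d1 d2.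
have : (p%:Z %| (s1%:Z - s2%:Z) * beta)%Z.
  have -> : (s1%:Z - s2%:Z) * beta = (s1%:Z * beta + t) - (s2%:Z * beta + t) by ring.
  exact: rpredB.
move=> /dvdz_mul_break h; have : s1%:Z - s2%:Z = 0 by apply: h; lia.
lia.
Qed.

Lemma break_residue_exists (t : int) :
  exists2 s : nat, (s < p)%N & (p%:Z %| s%:Z * beta + t)%Z.
Proof.
have p0 := prime_gt0 pp.
have [[u w] /= huw] := coprimezP _ _ coprimez_break.
set r := ((- t * w) %% p%:Z)%Z.
have r0 : 0 <= r by apply: modz_ge0; rewrite eqz_nat -lt0n.
have rp : r < p%:Z by apply: ltz_pmod; rewrite ltz_nat.
exists `|r|%N; first by rewrite -ltz_nat abszE ger0_norm.
rewrite abszE ger0_norm //; apply/dvdzP.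
exists (t * u - ((- t * w) %/ p%:Z)%Z * beta).
have -> : r = - t * w - ((- t * w) %/ p%:Z)%Z * p%:Z.
  by rewrite /r {2}(divz_eq (- t * w) p%:Z) addrC addKr.
set D := ((- t * w) %/ p%:Z)%Z.
apply/eqP; rewrite -subr_eq0 (_ : _ - _ = t * (1 - (u * p%:Z + w * beta))).
  by rewrite huw subrr mulr0.
ring.
Qed.

Definition const_breaks : nat -> int := fun _ => beta.

Definition adigit (t : int) : nat := afun p 1 const_breaks t.

Lemma adigitP t : (adigit t < p)%N /\ (p%:Z %| (adigit t)%:Z * beta + t)%Z.
Proof.
set P := fun s => ((bfun p 1 const_breaks s + t) %% (p ^ 1)%N%:Z)%Z == 0.
have hP s : (s < p)%N -> P s = (p%:Z %| s%:Z * beta + t)%Z.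
  move=> sp; rewrite /P /bfun big_nat1 subnn /digit expn0 divn1 muln1 expn1.
  by rewrite modn_small //; apply/idP/idP => [/eqP/dvdz_mod0P | /dvdz_mod0P/eqP].
have [s0 s0p hs0] := break_residue_exists t.
have hh : has P (iota 0 p) by apply/hasP; exists s0; rewrite ?mem_iota ?hP.
have := has_find P (iota 0 p); rewrite hh size_iota => /esym fp.
have := nth_find 0 hh; rewrite nth_iota // add0n.
by rewrite /adigit /afun expn1 -/P in fp *; move=> h; rewrite -hP.
Qed.

Lemma adigit_congr t1 t2 : (t1 == t2 %[mod p%:Z])%Z -> adigit t1 = adigit t2.
Proof.
rewrite eqz_mod_dvd => hd; have [ap1 ad1] := adigitP t1; have [ap2 ad2] := adigitP t2.
apply: (break_residue_uniq (t := t2) ap1 ap2) => //.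
have -> : (adigit t1)%:Z * beta + t2 = ((adigit t1)%:Z * beta + t1) - (t1 - t2) by ring.
exact: rpredB.
Qed.

Lemma adigit_shift t : (0 < adigit t)%N -> adigit (t + beta) = (adigit t).-1.
Proof.
move=> a0; have [ap ad] := adigitP t; have [ap' ad'] := adigitP (t + beta).
apply: (break_residue_uniq (t := t + beta) ap') => //; first exact: leq_ltn_trans (leq_pred _) ap.
have -> : ((adigit t).-1)%:Z * beta + (t + beta) = (adigit t)%:Z * beta + t.
  by rewrite -subn1 -subzn //; ring.
exact: ad.
Qed.

(* The exponent of the uniformizer of K in the scaffold element [lambda_t]. *)
Definition kexp (t : int) : int := ((t + (adigit t)%:Z * beta) %/ p%:Z)%Z.

Lemma kexpP t : p%:Z * kexp t = t + (adigit t)%:Z * beta.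
Proof. by have [_ hd] := adigitP t; rewrite mulrC /kexp divzK // addrC. Qed.

Lemma kexp_shift t : (0 < adigit t)%N -> kexp (t + beta) = kexp t.
Proof.
move=> a0; rewrite /kexp adigit_shift //; congr (_ %/ _)%Z.
by rewrite -subn1 -subzn //; ring.
Qed.

End BreakDigit.

Section Extension.
Variables (K : fieldType) (L : splittingFieldType K) (vK : K -> int) (vL : L -> int).
Variable p : nat.
Hypotheses (hvK : is_normalized_dval vK) (pp : prime p) (hvL : is_normalized_dval vL).
Hypothesis vL_alg : forall a : K, a != 0 -> vL a%:A = p%:Z * vK a.
Hypothesis dimL : \dim {:L} = p.
Variable pi : L.
Hypotheses (pi0 : pi != 0) (vpi : vL pi = 1).

Lemma alg_neq0 (a : K) : a != 0 -> a%:A != 0 :> L.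
Proof. by move=> a0; rewrite scaler_eq0 negb_or a0 oner_neq0. Qed.

Lemma vge_alg (a : K) N : vge vK a N -> vge vL a%:A (p%:Z * N).
Proof.
case=> [->|h]; first by rewrite scale0r; left.
have [->|a0] := eqVneq a 0; first by rewrite scale0r; left.
by right; rewrite vL_alg //; apply: ler_wpM2l.
Qed.

Lemma vge_alg_inv (a : K) (N : int) : vge vL a%:A (p%:Z * (N - 1) + 1) -> vge vK a N.
Proof.
have [->|a0] := eqVneq a 0; first by left.
rewrite (vgeE vL _ (alg_neq0 a0)) (vgeE vK _ a0) vL_alg //; have := prime_gt0 pp; nia.
Qed.

Lemma val_term (c : K) (i : nat) : c != 0 ->
  c *: pi ^+ i != 0 /\ vL (c *: pi ^+ i) = p%:Z * vK c + i%:Z.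
Proof.
move=> c0; have pn : pi ^+ i != 0 by rewrite expf_neq0.
rewrite -mulr_algl; split; first by rewrite mulf_neq0 // alg_neq0.
by rewrite (valM hvL) ?alg_neq0 // vL_alg // (valX hvL) // vpi mulr1.
Qed.

Lemma mulzD_rem_inj (x y : int) (i j : nat) : (i < p)%N -> (j < p)%N ->
  p%:Z * x + i%:Z = p%:Z * y + j%:Z -> i = j.
Proof.
move=> ip jp e; case: (ltgtP x y) => h.
- have : p%:Z * (x + 1) <= p%:Z * y by apply: ler_wpM2l; lia.
  lia.
- have : p%:Z * (y + 1) <= p%:Z * x by apply: ler_wpM2l; lia.
  lia.
- by subst; apply/eqP; rewrite -(eqz_nat i j); apply/eqP; lia.
Qed.

Definition pi_comb (c : 'I_p -> K) : L := \sum_(i < p) c i *: pi ^+ i.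

Definition term_val (c : 'I_p -> K) (i : 'I_p) : int := p%:Z * vK (c i) + (i : nat)%:Z.

(* The terms of [pi_comb c] have valuations distinct mod p, so the least one wins. *)
Lemma val_pi_comb_min (c : 'I_p -> K) (j : 'I_p) : c j != 0 ->
  (forall i, c i != 0 -> term_val c j <= term_val c i) ->
  pi_comb c != 0 /\ vL (pi_comb c) = term_val c j.
Proof.
move=> cj hmin; rewrite /pi_comb (bigD1 j) //=.
have [t0 tv] := val_term j cj; rewrite /term_val -tv.
apply: (val_addr_small hvL t0); apply: (vge_sum hvL) => i ij.
have [->|ci] := eqVneq (c i) 0; first by rewrite scale0r; left.
have [_ ti] := val_term i ci; right; rewrite ti tv.
have := hmin i ci; rewrite /term_val le_eqVlt => /orP[/eqP e|]; last lia.
by move: ij; rewrite (val_inj (mulzD_rem_inj (ltn_ord j) (ltn_ord i) e)) eqxx.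
Qed.

Lemma val_pi_comb_le (c : 'I_p -> K) (i : 'I_p) : c i != 0 ->
  pi_comb c != 0 /\ vL (pi_comb c) <= term_val c i.
Proof.
move=> ci; have [j cj hj] := arg_minP (P := fun k => c k != 0) (term_val c) ci.
by have [d0 ->] := val_pi_comb_min cj hj; split=> //; apply: hj.
Qed.

Definition pi_powers := [tuple pi ^+ (i : nat) | i < p].

Lemma pi_powers_basis : basis_of {:L} pi_powers.
Proof.
have nth_pow (i : 'I_p) : pi_powers`_i = pi ^+ i by rewrite -tnth_nth tnth_mktuple.
rewrite basisEfree subvf size_tuple dimL leqnn !andbT; apply/freeP => k hk i.
apply/eqP; apply: contraT => ki; have [] := val_pi_comb_le ki.
by rewrite /pi_comb; under eq_bigr do rewrite -nth_pow; rewrite hk eqxx.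
Qed.

Lemma pi_combP (z : L) : exists c : 'I_p -> K, z = pi_comb c.
Proof.
exists (fun i => coord pi_powers i z).
rewrite /pi_comb {1}(coord_basis pi_powers_basis (memvf z)).
by apply: eq_bigr => i _; rewrite -tnth_nth tnth_mktuple.
Qed.

Lemma nonneg_of_mulzD (x : int) (i : nat) : (i < p)%N -> 0 <= p%:Z * x + i%:Z -> 0 <= x.
Proof.
move=> ip h; case: (lerP 0 x) => // hx.
have : p%:Z * (x + 1) <= p%:Z * 0 by apply: ler_wpM2l; lia.
lia.
Qed.

Lemma pi_comb_integral (c : 'I_p -> K) :
  vge vL (pi_comb c) 0 -> forall i, vge vK (c i) 0.
Proof.
move=> h i; have [->|ci] := eqVneq (c i) 0; first by left.
have [d0 dv] := val_pi_comb_le ci; right; move/(vgeE vL _ d0): h => h.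
exact: nonneg_of_mulzD (ltn_ord i) (le_trans h dv).
Qed.

(* [L/K] is totally ramified, so the residue field of [L] is that of [K]. *)
Lemma residue_alg (w : L) : vge vL w 0 -> exists d : K, vge vL (w - d%:A) 1.
Proof.
set i0 : 'I_p := Ordinal (prime_gt0 pp).
have [c ->] := pi_combP w => /pi_comb_integral hc; exists (c i0).
rewrite /pi_comb (bigD1 i0) //= expr0 addrAC subrr add0r.
apply: (vge_sum hvL) => i ii0.
have [->|ci] := eqVneq (c i) 0; first by rewrite scale0r; left.
right; have [_ ->] := val_term i ci; move/(vgeE vK _ ci): (hc i).
have : (i : nat) != 0%N by apply: contra ii0 => /eqP e; apply/eqP/val_inj.
lia.
Qed.

Variable cc : K.
Hypotheses (cc0 : cc != 0) (vcc : vK cc = 1).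

Lemma val_alg_expz (m : int) : vL (cc ^ m)%:A = p%:Z * m.
Proof. by rewrite vL_alg ?expfz_neq0 // (valXz hvK) // vcc mulr1. Qed.

Lemma galX_iter (t : gal_of {:L}) n x : (t ^+ n)%g x = iter n t x.
Proof. by elim: n => [|n IH]; rewrite ?expg0 ?gal_id // expgSr galM ?memvf // IH. Qed.

Lemma gal_vge_bound (t : gal_of {:L}) z :
  vge vL z 0 -> vge vL (t z) (- (p%:Z * `|vL (t pi)|)).
Proof.
have [c ->] := pi_combP z => /pi_comb_integral hc.
have tpi0 : t pi != 0 by rewrite fmorph_eq0.
rewrite rmorph_sum /=; apply: (vge_sum hvL) => i _.
rewrite linearZ /= rmorphXn -mulr_algl.
have := vgeM hvL (vge_alg (hc i)) (vge_val vL (t pi ^+ i)).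
rewrite mulr0 add0r (valX hvL) //; apply: vgeW; have ip := ltn_ord i.
have : `|vL (t pi)| * (i : nat)%:Z <= `|vL (t pi)| * p%:Z by apply: ler_wpM2l => //; lia.
have : - `|vL (t pi)| * (i : nat)%:Z <= vL (t pi) * (i : nat)%:Z.
  by apply: ler_wpM2r => //; lia.
lia.
Qed.

(* An element with [vL (t y) < 0] would have powers of unbounded negative valuation. *)
Lemma gal_vge0 (t : gal_of {:L}) y : vge vL y 0 -> vge vL (t y) 0.
Proof.
move=> hy; have [->|ty0] := eqVneq (t y) 0; first by left.
set B := - (p%:Z * `|vL (t pi)|).
right; rewrite leNgt; apply/negP => neg.
have := gal_vge_bound t (vge0_expn hvL `|B|.+1 hy); rewrite rmorphXn.
rewrite (vgeE vL _ (expf_neq0 _ ty0)) (valX hvL) //.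
have : (`|B|.+1)%:Z * vL (t y) <= (`|B|.+1)%:Z * (-1) by apply: ler_wpM2l; lia.
lia.
Qed.

Lemma gal_val (t : gal_of {:L}) y : y != 0 -> vL (t y) = vL y.
Proof.
move=> y0; set m := vL y; set z := y ^+ p * (cc ^ (- m))%:A.
have cm0 : (cc ^ (- m))%:A != 0 :> L by apply: alg_neq0; rewrite expfz_neq0.
have z0 : z != 0 by rewrite mulf_neq0 // expf_neq0.
have vz : vL z = 0.
  by rewrite (valM hvL) ?expf_neq0 // (valX hvL) // val_alg_expz /m; lia.
have tz0 : t z != 0 by rewrite fmorph_eq0.
have hz : vge vL (t z) 0 by apply: gal_vge0; right; rewrite vz.
have hzV : vge vL (t z^-1) 0 by apply: gal_vge0; right; rewrite (valV hvL) // vz.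
rewrite fmorphV (vgeE vL _ (invr_neq0 tz0)) (valV hvL) // in hzV.
have tz : t z = t y ^+ p * (cc ^ (- m))%:A.
  by rewrite /z rmorphM rmorphXn; congr (_ * _); apply: rmorph_alg.
rewrite (vgeE vL _ tz0) in hz; rewrite tz in hz hzV.
have ty0 : t y != 0 by rewrite fmorph_eq0.
rewrite (valM hvL) ?expf_neq0 // val_alg_expz (valX hvL) // in hz hzV.
have := prime_gt0 pp; nia.
Qed.

Lemma gal_vge (t : gal_of {:L}) y N : vge vL y N -> vge vL (t y) N.
Proof.
case=> [->|h]; first by rewrite rmorph0; left.
by have [->|y0] := eqVneq y 0; [rewrite rmorph0; left | right; rewrite gal_val].
Qed.

Variable s : gal_of {:L}.
Hypothesis s_neq1 : s != 1%g.

Definition delta : 'End(L) := (s : 'End(L)) - 1.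

Lemma deltaE x : delta x = s x - x.
Proof. by rewrite add_lfunE opp_lfunE id_lfunE. Qed.

Lemma delta_expS k x : (delta ^+ k.+1) x = delta ((delta ^+ k) x).
Proof. by rewrite exprSr lfun_mulE. Qed.

Lemma delta0 : delta 0 = 0. Proof. exact: linear0. Qed.

Lemma deltaB x y : delta (x - y) = delta x - delta y. Proof. exact: linearB. Qed.

Lemma deltaZ (c : K) x : delta (c *: x) = c *: delta x. Proof. exact: linearZ. Qed.

Lemma delta_sum (I : Type) (r : seq I) (P : pred I) (F : I -> L) :
  delta (\sum_(i <- r | P i) F i) = \sum_(i <- r | P i) delta (F i).
Proof. exact: linear_sum. Qed.

Lemma delta_algl (c : K) x : delta (c%:A * x) = c%:A * delta x.
Proof. by rewrite !mulr_algl deltaZ. Qed.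

Lemma delta_alg (c : K) : delta c%:A = 0.
Proof. by rewrite deltaE rmorph_alg subrr. Qed.

Lemma deltaM x y : delta (x * y) = delta x * s y + x * delta y.
Proof. rewrite !deltaE rmorphM; ring. Qed.

Definition break : int := vL (s pi - pi) - 1.

Definition ratio : L := s pi / pi.

Lemma s_pi : s pi = ratio * pi.
Proof. by rewrite /ratio divfK. Qed.

Lemma s_pi_neq : s pi - pi != 0.
Proof.
rewrite subr_eq0; apply: contra s_neq1 => /eqP e; apply/gal_eqP => z _.
have [c ->] := pi_combP z; rewrite gal_id rmorph_sum; apply: eq_bigr => i _.
by rewrite /= linearZ /= rmorphXn; congr (_ *: _ ^+ _); apply: e.
Qed.

Lemma val_ratio : vL ratio = 0.
Proof.
rewrite (valM hvL) ?invr_eq0 ?fmorph_eq0 // (valV hvL) //.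
by rewrite gal_val // vpi subrr.
Qed.

Lemma val_ratio_sub1 : ratio - 1 != 0 /\ vL (ratio - 1) = break.
Proof.
have e : s pi - pi = (ratio - 1) * pi by rewrite s_pi; ring.
have n0 : ratio - 1 != 0.
  by apply: contraNneq s_pi_neq; rewrite e => ->; rewrite mul0r.
by split=> //; rewrite /break e (valM hvL) // vpi; lia.
Qed.

Lemma delta_pi_exp (j : nat) : delta (pi ^+ j) = pi ^+ j * (ratio ^+ j - 1).
Proof.
rewrite deltaE; have -> : s (pi ^+ j) = s pi ^+ j by apply: rmorphXn.
by rewrite s_pi exprMn; ring.
Qed.

Lemma vge_ratio_exp_sub1 (j : nat) : vge vL (ratio ^+ j - 1) break.
Proof.
have hu : vge vL ratio 0 by right; rewrite val_ratio.
have he : vge vL (ratio - 1) break by right; rewrite (proj2 val_ratio_sub1).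
elim: j => [|j IH]; first by rewrite expr0 subrr; left.
have -> : ratio ^+ j.+1 - 1 = ratio * (ratio ^+ j - 1) + (ratio - 1) by rewrite exprS; ring.
by apply: (vgeD hvL) => //; have := vgeM hvL hu IH; rewrite add0r.
Qed.

Lemma delta_vge N z : vge vL z N -> vge vL (delta z) (N + break).
Proof.
case=> [->|hz]; first by rewrite delta0; left.
have [c hc] := pi_combP z; rewrite hc delta_sum; apply: (vge_sum hvL) => i _.
have [->|ci] := eqVneq (c i) 0; first by rewrite scale0r delta0; left.
rewrite deltaZ -mulr_algl delta_pi_exp mulrA.
have [_ dv] := val_pi_comb_le ci.
apply: (vgeW _ (vgeM hvL (vge_val vL _) (vge_ratio_exp_sub1 i))).
have [_ tv] := val_term i ci; rewrite -mulr_algl in tv.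
by rewrite tv; rewrite -hc /term_val in dv; lia.
Qed.

Lemma delta_vge_integral w : vge vL w 0 -> vge vL (delta w) (break + 1).
Proof.
move=> /residue_alg [d hd].
have -> : delta w = delta (w - d%:A) by rewrite deltaB delta_alg subr0.
by rewrite [break + 1]addrC; apply: delta_vge.
Qed.

Lemma mem_ram_group_break : s \in ram_group vL break.
Proof. by rewrite inE; apply/asboolP => x hx; rewrite -deltaE; apply: delta_vge_integral. Qed.

Lemma lower_break_eq (b : int) :
  lower_break vL p 1 1 b -> s \in ram_group vL b -> b = break.
Proof.
move=> [_ bmax] sb; apply/le_anti/andP; split.
  have hpi : vge vL pi 0 by right; rewrite vpi.
  move: sb; rewrite inE => /asboolP /(_ pi hpi) /(vgeE vL _ s_pi_neq).
  by rewrite /break; lia.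
apply: bmax; rewrite subnn expn0; apply/card_gt1P; exists 1%g, s.
rewrite mem_ram_group_break eq_sym s_neq1; split=> //.
by rewrite inE; apply/asboolP => x _; rewrite gal_id subrr; left.
Qed.

Hypothesis s_order : (s ^+ p)%g = 1%g.
Hypothesis vp : vge vK p%:R 1.

Lemma iter_s_pi (d : K) : vge vK d 0 -> vge vL (ratio - d%:A) 1 ->
  forall n, vge vL (iter n s pi - (d ^+ n)%:A * pi) 2.
Proof.
move=> hd hrd; elim=> [|n IH]; first by rewrite /= expr0 scale1r mul1r subrr; left.
set r := iter n s pi - (d ^+ n)%:A * pi.
have -> : iter n.+1 s pi - (d ^+ n.+1)%:A * pi = s r + (d ^+ n)%:A * ((ratio - d%:A) * pi).
  rewrite iterS -[iter n s pi](subrK ((d ^+ n)%:A * pi)) -/r rmorphD /= rmorphM /=.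
  by rewrite rmorph_alg s_pi exprSr -!in_algE rmorphM; ring.
apply: (vgeD hvL); first exact: gal_vge.
have hdn := vge0_expn hvK n hd.
by have := vgeM hvL (vge_alg hdn) (vgeM hvL hrd (vge_val vL pi)); rewrite vpi mulr0.
Qed.

Lemma break_ge1 : 1 <= break.
Proof.
have hu : vge vL ratio 0 by right; rewrite val_ratio.
have [d hd] := residue_alg hu.
have hdK : vge vK d 0.
  have hdL : vge vL d%:A 0.
    by rewrite -[d%:A](subKr ratio); apply: (vgeB hvL) => //; apply: vgeW hd.
  by apply: vge_alg_inv; apply: vgeW hdL; have := prime_gt0 pp; lia.
have hdp : vge vK (1 - d ^+ p) 1.
  have := iter_s_pi hdK hd p; rewrite -galX_iter s_order gal_id.
  have -> : pi - (d ^+ p)%:A * pi = (1 - d ^+ p)%:A * pi by rewrite scalerBl scale1r; ring.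
  move=> h.
  apply: vge_alg_inv; rewrite mulr0 add0r.
  have := vgeM hvL h (vge_val vL pi^-1); rewrite mulfK // (valV hvL) // vpi.
  by apply: vgeW.
have hd1 : vge vK (d - 1) 1.
  apply: (vge1_expn hvK (prime_gt0 pp)).
  have -> : (d - 1) ^+ p = - (d ^+ p - 1 - (d - 1) ^+ p) - (1 - d ^+ p) by ring.
  by apply: (vgeB hvK) => //; apply/(vgeN hvK)/(vge_frobenius_defect hvK).
have : vge vL (ratio - 1) 1.
  have -> : ratio - 1 = (ratio - d%:A) + (d - 1)%:A by rewrite scalerBl scale1r; ring.
  apply: (vgeD hvL) => //; apply: vgeW (vge_alg hd1); have := prime_gt0 pp; lia.
by have [n0 <-] := val_ratio_sub1; rewrite (vgeE vL _ n0).
Qed.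

Lemma alg_nat n : (n%:R : K)%:A = n%:R :> L.
Proof. by rewrite -in_algE rmorph_nat. Qed.

Lemma ratio_exp_sub1_linear (n : nat) :
  vge vL (ratio ^+ n - 1 - n%:R * (ratio - 1)) (break + break).
Proof.
have hu : vge vL ratio 0 by right; rewrite val_ratio.
have he : vge vL (ratio - 1) break by right; rewrite (proj2 val_ratio_sub1).
elim: n => [|n IH]; first by rewrite expr0 subrr mul0r subr0; left.
have -> : ratio ^+ n.+1 - 1 - n.+1%:R * (ratio - 1) =
    ratio * (ratio ^+ n - 1 - n%:R * (ratio - 1)) + n%:R * ((ratio - 1) * (ratio - 1)).
  by rewrite exprS -natr1; ring.
apply: (vgeD hvL); first by have := vgeM hvL hu IH; rewrite add0r.
by have := vgeM hvL (vge_nat hvL n) (vgeM hvL he he); rewrite add0r.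
Qed.

Lemma val_ratio_exp_sub1 (j : nat) : ~~ (p %| j)%N ->
  ratio ^+ j - 1 != 0 /\ vL (ratio ^+ j - 1) = break.
Proof.
move=> ndvd; have [en0 ve] := val_ratio_sub1.
have hpL : vge vL (p%:R : L) 1.
  by rewrite -alg_nat; apply: vgeW (vge_alg vp); have := prime_gt0 pp; lia.
have [jn0 vj] := val_nat_coprime hvL pp hpL ndvd.
have x0 : j%:R * (ratio - 1) != 0 by rewrite mulf_neq0.
have vx : vL (j%:R * (ratio - 1)) = break by rewrite (valM hvL) // vj ve add0r.
have hr : vge vL (ratio ^+ j - 1 - j%:R * (ratio - 1)) (vL (j%:R * (ratio - 1)) + 1).
  by apply: vgeW (ratio_exp_sub1_linear j); rewrite vx; have := break_ge1; lia.
by have [] := val_addr_small hvL x0 hr; rewrite addrC subrK vx.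
Qed.

Lemma val_delta_pi_exp (j : nat) : ~~ (p %| j)%N ->
  delta (pi ^+ j) != 0 /\ vL (delta (pi ^+ j)) = j%:Z + break.
Proof.
move=> /val_ratio_exp_sub1 [n0 vr]; rewrite delta_pi_exp.
by rewrite mulf_neq0 ?expf_neq0 // (valM hvL) ?expf_neq0 // (valX hvL) // vpi mulr1 vr.
Qed.

(* Write [z = cc^k pi^j w] with [w] a unit; [delta] acts on [pi^j] with exact
   valuation, and on [w] with strictly larger valuation. *)
Lemma val_delta z : z != 0 -> ~~ (p%:Z %| vL z)%Z ->
  delta z != 0 /\ vL (delta z) = vL z + break.
Proof.
move=> z0 ndvd; set m := vL z; set k := (m %/ p%:Z)%Z.
have [j hj] : exists j : nat, (m %% p%:Z)%Z = j%:Z.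
  by exists `|(m %% p%:Z)%Z|%N; rewrite abszE ger0_norm ?modz_ge0 // eqz_nat -lt0n prime_gt0.
have hm : m = k * p%:Z + j%:Z by rewrite -hj /k -divz_eq.
have jndvd : ~~ (p %| j)%N.
  apply: contra ndvd => /dvdnP[q hq]; rewrite -/m hm hq PoszM.
  by apply: rpredD; apply/dvdz_mull/dvdzz.
have q0 : (cc ^ k)%:A * pi ^+ j != 0 by rewrite mulf_neq0 ?alg_neq0 ?expfz_neq0 ?expf_neq0.
set w := z / ((cc ^ k)%:A * pi ^+ j).
have w0 : w != 0 by rewrite mulf_neq0 ?invr_eq0.
have vw : vL w = 0.
  rewrite (valM hvL) ?invr_eq0 // (valV hvL) // (valM hvL) ?alg_neq0 ?expfz_neq0 ?expf_neq0 //.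
  by rewrite val_alg_expz (valX hvL) // vpi mulr1 -/m hm; lia.
have ez : z = (cc ^ k)%:A * (pi ^+ j * w) by rewrite mulrA mulrC /w divfK.
have [dp0 dpv] := val_delta_pi_exp jndvd.
have A0 : delta (pi ^+ j) * s w != 0 by rewrite mulf_neq0 ?fmorph_eq0.
have vA : vL (delta (pi ^+ j) * s w) = j%:Z + break.
  by rewrite (valM hvL) ?fmorph_eq0 // gal_val // vw addr0.
have hB : vge vL (pi ^+ j * delta w) (vL (delta (pi ^+ j) * s w) + 1).
  have hw : vge vL w 0 by right; rewrite vw.
  have := vgeM hvL (vge_val vL (pi ^+ j)) (delta_vge_integral hw).
  by rewrite vA (valX hvL) // vpi mulr1 addrA; apply: vgeW.
have [S0 Sv] := val_addr_small hvL A0 hB.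
rewrite ez delta_algl deltaM mulf_neq0 ?alg_neq0 ?expfz_neq0 //; split=> //.
by rewrite (valM hvL) ?alg_neq0 ?expfz_neq0 // Sv vA val_alg_expz -/m hm; ring.
Qed.

Lemma lfun_exp_iter (f : 'End(L)) n x : (f ^+ n) x = iter n f x.
Proof. by elim: n => [|n IH]; rewrite ?expr0 ?id_lfunE // exprSr lfun_mulE IH. Qed.

Definition binom_tail y := \sum_(1 <= i < p) 'C(p, i)%:R * (delta ^+ i) y.

(* [(1 + delta)^p = s^p = 1] in [End(L)]. *)
Lemma delta_expp y : (delta ^+ p) y = - binom_tail y.
Proof.
have natE (f : 'End(L)) n x : (f *+ n) x = n%:R * f x.
  by rewrite -scaler_nat scale_lfunE -mulr_algl alg_nat.
have := lfun_exp_iter s p y; rewrite -galX_iter s_order gal_id -(subrK 1 (s : 'End(L))).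
rewrite exprD1n sum_lfunE -(big_mkord xpredT (fun i => (delta ^+ i *+ 'C(p, i)) y)).
rewrite big_nat_recr //= big_ltn ?prime_gt0 // expr0 bin0 binn !natE id_lfunE !mul1r.
under eq_big_nat => i _ do rewrite natE.
rewrite -/(binom_tail y) => e.
by apply: (addrI (y + binom_tail y)); rewrite e addrK.
Qed.

Lemma val_delta_exp z n : z != 0 ->
  (forall j, (j < n)%N -> ~~ (p%:Z %| vL z + j%:Z * break)%Z) ->
  forall j, (j <= n)%N -> (delta ^+ j) z != 0 /\ vL ((delta ^+ j) z) = vL z + j%:Z * break.
Proof.
move=> z0 hn; elim=> [|j IH] hj; first by rewrite expr0 id_lfunE mul0r addr0.
have [n0 nv] := IH (ltnW hj); have := hn j hj; rewrite -nv => nd.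
have [d0 dv] := val_delta n0 nd.
by rewrite delta_expS; split=> //; rewrite dv nv -addn1 PoszD; ring.
Qed.

Lemma binom_tail_pchar : (p%:R : K) = 0 -> forall y, binom_tail y = 0.
Proof.
move=> h y; rewrite /binom_tail big_seq big1 // => i; rewrite mem_index_iota => hi.
by rewrite -(divnK (prime_dvd_bin pp hi)) natrM -(alg_nat p) h scale0r mulr0 mul0r.
Qed.

(* In characteristic 0 the term [p delta y] dominates. *)
Lemma val_binom_tail z : (p%:R : K) != 0 -> z != 0 ->
  (forall i, (i < p)%N -> (delta ^+ i) z != 0 /\ vL ((delta ^+ i) z) = vL z + i%:Z * break) ->
  binom_tail z != 0 /\ vL (binom_tail z) = p%:Z * vK p%:R + vL z + break.
Proof.
move=> p0 z0 hc; have p1 := prime_gt1 pp.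
have [d1 v1] := hc 1%N p1; rewrite expr1 in d1 v1.
rewrite /binom_tail big_ltn // bin1 -alg_nat.
have t0 : (p%:R : K)%:A * delta z != 0 by rewrite mulf_neq0 ?alg_neq0.
have tv : vL ((p%:R : K)%:A * delta z) = p%:Z * vK p%:R + vL z + break.
  by rewrite (valM hvL) ?alg_neq0 // vL_alg // v1 mul1r addrA.
have hr : vge vL (\sum_(2 <= i < p) 'C(p, i)%:R * (delta ^+ i) z)
            (vL ((p%:R : K)%:A * delta z) + 1).
  rewrite big_seq; apply: (vge_sum hvL) => i; rewrite mem_index_iota => /andP[i2 ip].
  have i1 : (0 < i < p)%N by rewrite ip (ltn_trans _ i2).
  rewrite -(divnK (prime_dvd_bin pp i1)) natrM -(alg_nat p).
  have [_ vi] := hc i ip.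
  apply: vgeW (vgeM hvL (vgeM hvL (vge_nat hvL _) (vge_val vL _)) (vge_val vL _)).
  rewrite vi tv vL_alg // add0r.
  have hb := break_ge1; have : 2%:Z * break <= i%:Z * break by apply: ler_wpM2r; lia.
  lia.
by have [S0 Sv] := val_addr_small hvL t0 hr; rewrite Sv tv.
Qed.

(* If [p | break], then [delta] acts on [pi] with exact valuation [p] times,
   which is incompatible with [delta^p = - binom_tail]. *)
Lemma break_ndvd : (p%:R : K) = 0 \/ break * (p%:Z - 1) != p%:Z * vK p%:R ->
  ~~ (p%:Z %| break)%Z.
Proof.
move=> hc; apply/negP => hd.
have hn j : (j < p)%N -> ~~ (p%:Z %| vL pi + j%:Z * break)%Z.
  move=> _; apply/negP; rewrite vpi => h1.
  have : (p%:Z %| 1)%Z by have := rpredB h1 (dvdz_mull j%:Z hd); rewrite addrK.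
  by rewrite dvdzE /= dvdn1 => /eqP p1; move: (prime_gt1 pp); rewrite p1.
have [dp0 dpv] := val_delta_exp pi0 hn (leqnn p).
have eb := delta_expp pi.
have [hp0|hp0] := eqVneq (p%:R : K) 0.
  by move: dp0; rewrite eb binom_tail_pchar // oppr0 eqxx.
case: hc => [/eqP|/eqP hc]; first by rewrite (negPf hp0).
have [_ rv] := val_binom_tail hp0 pi0 (fun i ip => val_delta_exp pi0 hn (ltnW ip)).
by move: dpv; rewrite eb (valN hvL) rv vpi => e; apply: hc; lia.
Qed.

(* The scaffold consists of the [delta^j scaffold_seed], scaled by powers of [cc]. *)
Definition scaffold_seed : L := pi ^ (- ((p.-1)%:Z * break)).

Definition seed_tolerance (T : option int) : Prop :=
  match T with
  | None => (delta ^+ p) scaffold_seed = 0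
  | Some T => vge vL ((delta ^+ p) scaffold_seed) (break + T)
  end.

Lemma val_seed : vL scaffold_seed = - ((p.-1)%:Z * break).
Proof. by rewrite (valXz hvL) // vpi mulr1. Qed.

Lemma val_delta_exp_seed : ~~ (p%:Z %| break)%Z -> forall j, (j <= p.-1)%N ->
  (delta ^+ j) scaffold_seed != 0 /\
  vL ((delta ^+ j) scaffold_seed) = vL scaffold_seed + j%:Z * break.
Proof.
move=> hnd j hj; apply: (val_delta_exp (n := p.-1)) => //; first exact: expfz_neq0.
move=> i hi; rewrite val_seed; apply/negP => hd.
have e : - ((p.-1)%:Z * break) + i%:Z * break = - ((p.-1 - i)%N%:Z * break).
  by rewrite -subzn ?(ltnW hi) //; ring.
move: hd; rewrite e rpredN => /(dvdz_mul_break pp hnd) h.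
have : (p.-1 - i)%N%:Z = 0 by apply: h; have := prime_gt1 pp; lia.
lia.
Qed.

Lemma seed_tolerance_pchar : (p%:R : K) = 0 -> seed_tolerance None.
Proof. by move=> h; rewrite /= delta_expp binom_tail_pchar // oppr0. Qed.

(* [delta^(p-1) scaffold_seed] is a unit, so one more [delta] gives valuation >= [break + 1]. *)
Lemma seed_tolerance_char0 : (p%:R : K) != 0 -> ~~ (p%:Z %| break)%Z ->
  let T := p%:Z * vK p%:R - (p%:Z - 1) * break in 1 <= T /\ seed_tolerance (Some T).
Proof.
move=> p0 hnd T; have ep : (p.-1)%:Z = p%:Z - 1 by rewrite -subn1 subzn ?prime_gt0.
have hY := val_delta_exp_seed hnd.
have hc i : (i < p)%N -> (delta ^+ i) scaffold_seed != 0 /\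
    vL ((delta ^+ i) scaffold_seed) = vL scaffold_seed + i%:Z * break.
  by move=> ip; apply: hY; rewrite -ltnS prednK ?prime_gt0.
have [r0 rv] := val_binom_tail p0 (expfz_neq0 _ pi0) hc.
rewrite val_seed in rv.
have eb := delta_expp scaffold_seed.
have [d0 dv] := hY _ (leqnn p.-1).
have hu : vge vL ((delta ^+ p.-1) scaffold_seed) 0 by right; rewrite dv val_seed addrC subrr.
have := delta_vge_integral hu; rewrite -delta_expS prednK ?prime_gt0 //.
rewrite eb (vgeE vL _ (_ : - _ != 0)) ?oppr_eq0 // (valN hvL) rv ep /= => h.
split; first by rewrite /T; lia.
by right; rewrite eb (valN hvL) rv ep /T; lia.
Qed.

Section Scaffold.
Hypothesis break_ndvd_p : ~~ (p%:Z %| break)%Z.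

Notation adigit := (adigit p break).
Notation kexp := (kexp p break).

Definition scaffold_elt (t : int) : L :=
  (cc ^ kexp t)%:A * (delta ^+ (p.-1 - adigit t)) scaffold_seed.

Lemma scaffold_eltP t : scaffold_elt t != 0 /\ vL (scaffold_elt t) = t.
Proof.
have [ap _] := adigitP pp break_ndvd_p t.
have [d0 dv] := val_delta_exp_seed break_ndvd_p (leq_subr (adigit t) p.-1).
rewrite mulf_neq0 ?alg_neq0 ?expfz_neq0 //; split=> //.
rewrite (valM hvL) ?alg_neq0 ?expfz_neq0 // val_alg_expz kexpP // dv val_seed.
have ha : (adigit t <= p.-1)%N by rewrite -ltnS prednK ?prime_gt0.
by rewrite -subzn //; ring.
Qed.

Lemma scaffold_elt_ratio t1 t2 : (t1 == t2 %[mod p%:Z])%Z ->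
  exists a : K, scaffold_elt t1 / scaffold_elt t2 = a%:A.
Proof.
move=> /(adigit_congr pp break_ndvd_p) ea; exists (cc ^ kexp t1 / cc ^ kexp t2).
have [d0 _] := val_delta_exp_seed break_ndvd_p (leq_subr (adigit t2) p.-1).
rewrite /scaffold_elt ea invfM mulrACA divff // mulr1.
by rewrite -!in_algE -fmorphV -rmorphM.
Qed.

Lemma delta_scaffold_elt t : (0 < adigit t)%N ->
  delta (scaffold_elt t) = scaffold_elt (t + break).
Proof.
move=> a0; have [ap _] := adigitP pp break_ndvd_p t.
rewrite /scaffold_elt delta_algl kexp_shift // adigit_shift // -delta_expS.
by congr (_ * (delta ^+ _) _); lia.
Qed.

Lemma delta_scaffold_elt_top t : adigit t = 0%N ->
  delta (scaffold_elt t) = (cc ^ kexp t)%:A * (delta ^+ p) scaffold_seed.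
Proof.
by move=> a0; rewrite /scaffold_elt delta_algl a0 subn0 -delta_expS prednK ?prime_gt0.
Qed.

Lemma delta_scaffold_elt_top_congr T t : seed_tolerance T -> adigit t = 0%N ->
  congr_mod vL T (scaffold_elt (t + break)) (delta (scaffold_elt t)) 0.
Proof.
move=> hT a0; rewrite delta_scaffold_elt_top //.
case: T hT => [T|] /= hT; last by rewrite hT mulr0.
have [l0 lv] := scaffold_eltP (t + break).
exists ((cc ^ kexp t)%:A * (delta ^+ p) scaffold_seed / scaffold_elt (t + break)).
rewrite subr0 [scaffold_elt _ * _]mulrC divfK //; split=> //.
have [->|n0] := eqVneq ((delta ^+ p) scaffold_seed) 0; first by rewrite mulr0 mul0r; left.
have ck0 : (cc ^ kexp t)%:A != 0 :> L by rewrite alg_neq0 ?expfz_neq0.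
right; rewrite (valM hvL) ?mulf_neq0 ?invr_eq0 // (valV hvL) // lv (valM hvL) //.
rewrite val_alg_expz kexpP // a0 mul0r addr0; move: hT; rewrite (vgeE vL _ n0); lia.
Qed.

Definition delta_kg : Kgroupalg L := [ffun g => (g == s)%:R - (g == 1%g)%:R].

Lemma kg_act_delta x : kg_act delta_kg x = delta x.
Proof.
rewrite /kg_act deltaE (bigD1 s) //= (bigD1 1%g) 1?eq_sym //= big1 => [|g /andP[gs g1]].
  rewrite !ffunE eqxx (negPf s_neq1) eq_sym (negPf s_neq1) gal_id eqxx /=.
  by rewrite subr0 sub0r scale1r scaleN1r addr0.
by rewrite ffunE (negPf gs) (negPf g1) subrr scale0r.
Qed.

Lemma is_scaffold_break T : tol_ge1 T -> seed_tolerance T ->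
  is_scaffold vK vL p 1 (const_breaks break) T scaffold_elt (fun=> delta_kg).
Proof.
move=> hT1 hT; split=> //; split=> //; split; first exact: scaffold_eltP.
split; first by move=> t1 t2; rewrite expn1; apply: scaffold_elt_ratio.
split=> [i _|i t /andP[i1 i2]]; first by rewrite kg_act_delta deltaE rmorph1 subrr.
have -> : i = 1%N by apply/eqP; rewrite eqn_leq i1 i2.
have [ap _] := adigitP pp break_ndvd_p t.
rewrite subnn expn0 mul1r /digit expn0 divn1 -/(adigit t) modn_small //.
exists 1; rewrite oner_neq0 (val1 hvK) scale1r mul1r kg_act_delta; split=> //.
rewrite /const_breaks; case: (posnP (adigit t)) => a0.
  exact: delta_scaffold_elt_top_congr.
rewrite delta_scaffold_elt //; case: T {hT1 hT} => [T|] //=.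
by exists 0; rewrite subrr mulr0; split=> //; left.
Qed.

End Scaffold.

Lemma galois_scaffold_of_generator (b1 : int) :
  lower_break vL p 1 1 b1 -> s \in ram_group vL b1 ->
  (p \in [pchar K] -> galois_scaffold vK vL p 1 None) /\
  ([pchar K] =i pred0 -> b1 * (p%:Z - 1) != p%:Z * vK p%:R ->
     1 <= p%:Z * vK p%:R - (p%:Z - 1) * b1 /\
     galois_scaffold vK vL p 1 (Some (p%:Z * vK p%:R - (p%:Z - 1) * b1))).
Proof.
move=> hb sb; have eb := lower_break_eq hb sb; rewrite eb in hb *.
have hbreaks i : (1 <= i <= 1)%N -> lower_break vL p 1 i (const_breaks break i).
  by move=> /andP[i1 i2]; have -> : i = 1%N by apply/eqP; rewrite eqn_leq i1 i2.
split=> [/pcharf0 p0 | hch hne].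
  exists (const_breaks break); split=> //; exists scaffold_elt, (fun=> delta_kg).
  by apply: is_scaffold_break; [apply: break_ndvd; left | | exact: seed_tolerance_pchar].
have p0 : (p%:R : K) != 0 by apply/negP => /eqP h; have := hch p; rewrite !inE pp h eqxx.
have hnd := break_ndvd (or_intror hne).
have [T1 hT] := seed_tolerance_char0 p0 hnd.
split=> //; exists (const_breaks break); split=> //; exists scaffold_elt, (fun=> delta_kg).
exact: is_scaffold_break.
Qed.

End Extension.

Lemma gal_expg_dim (K : fieldType) (L : splittingFieldType K) (s : gal_of {:L}) :
  galois 1 {:L} -> (s ^+ \dim {:L})%g = 1%g.
Proof.
move=> galL; have sG : s \in galoisG {:L} 1%AS.
  by rewrite gal_kHom ?sub1v // k1HomE; exact: ahomWin.
have -> : \dim {:L} = #|galoisG {:L} 1%AS| by rewrite -galois_dim // dimv1 divn1.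
exact: cyclic.expg_cardG.
Qed.

Lemma lower_break_nontrivial (K : fieldType) (L : splittingFieldType K) (vL : L -> int)
    (p : nat) (b : int) :
  lower_break vL p 1 1 b -> exists2 s : gal_of {:L}, s \in ram_group vL b & s != 1%g.
Proof.
case; rewrite subnn expn0 => /card_gt1P [x [y [xb yb xy]]] _.
by have [x1|] := eqVneq x 1%g; [exists y; rewrite // -x1 eq_sym | exists x].
Qed.

Theorem lemma4p1 (K : fieldType) (L : splittingFieldType K)
    (vK : K -> int) (vL : L -> int) (p : nat) (b1 : int) :
  is_normalized_dval vK -> complete_wrt vK ->
  prime p -> vge vK (p%:R) 1 -> residue_perfect vK p ->
  is_normalized_dval vL ->
  (forall a : K, a != 0 -> vL a%:A = p%:Z * vK a) ->
  galois 1 {:L} -> \dim {:L} = p ->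
  lower_break vL p 1 1 b1 ->
  (p \in [pchar K] -> galois_scaffold vK vL p 1 None) /\
  ([pchar K] =i pred0 -> b1 * (p%:Z - 1) != p%:Z * vK p%:R ->
     1 <= p%:Z * vK p%:R - (p%:Z - 1) * b1 /\
     galois_scaffold vK vL p 1 (Some (p%:Z * vK p%:R - (p%:Z - 1) * b1))).
Proof.
move=> hvK _ pp vp _ hvL vL_alg galL dimL hb.
have [_ _ [pi [pi0 vpi]]] := hvL.
have [_ _ [cc [cc0 vcc]]] := hvK.
have [s sb s1] := lower_break_nontrivial hb.
have s_order : (s ^+ p)%g = 1%g by rewrite -dimL gal_expg_dim.
exact: (galois_scaffold_of_generator hvK pp hvL vL_alg dimL pi0 vpi cc0 vcc s1 s_order vp hb sb).
Qed.
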